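(* If a non-empty graph $T$ is a $\mathsf{TJ}_n$-graph for infinitely many integers $n$, then there exists an integer $k$ such that $T$ is a maximum $\mathsf{TJ}_k$-graph.
   Context: Graphs are finite, simple, undirected; non-empty means having at least one vertex. $\mathsf{TJ}_k(G)$ is the graph on the cliques of $G$ of size $k$ where $C, C'$ are adjacent iff $|C \setminus C'| = |C' \setminus C| = 1$. $T$ is a $\mathsf{TJ}_k$-graph if $T \cong \mathsf{TJ}_k(G)$ for some graph $G$, and a maximum $\mathsf{TJ}_k$-graph if $T \cong \mathsf{TJ}_k(G)$ for some $G$ with $\omega(G) = k$ ($\omega$ = maximum clique size). *)

From mathcomp Require Import all_boot.
Set Implicit Arguments. Unset Strict Implicit. Unset Printing Implicit Defensive.

Definition simple_graph (V : finType) (e : rel V) : Prop :=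
  symmetric e /\ irreflexive e.

Definition clique (V : finType) (e : rel V) (C : {set V}) : bool :=
  [forall x in C, forall y in C, (x != y) ==> e x y].

Definition clique_number (V : finType) (e : rel V) : nat :=
  \max_(C : {set V} | clique e C) #|C|.

Definition tj_adj (V : finType) (C C' : {set V}) : bool :=
  (#|C :\: C'| == 1) && (#|C' :\: C| == 1).

Definition iso_TJ (k : nat) (VT : finType) (eT : rel VT)
    (V : finType) (e : rel V) : Prop :=
  exists f : VT -> {set V},
    injective f /\
    (forall C : {set V}, (clique e C && (#|C| == k)) <-> exists x, f x = C) /\
    (forall x y, eT x y = tj_adj (f x) (f y)).

Definition is_TJ_graph (k : nat) (VT : finType) (eT : rel VT) : Prop :=
  exists (V : finType) (e : rel V), simple_graph e /\ iso_TJ k eT e.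

Definition is_max_TJ_graph (k : nat) (VT : finType) (eT : rel VT) : Prop :=
  exists (V : finType) (e : rel V),
    simple_graph e /\ clique_number e = k /\ iso_TJ k eT e.

From mathcomp Require Import all_boot.
Set Implicit Arguments. Unset Strict Implicit. Unset Printing Implicit Defensive.

(* Take n >= |V(T)| with T = TJ_n(G). The vertices of T are the n-cliques of G,
   so G has at least one n-clique since T is non-empty. A clique of G with more
   than n vertices would contain an (n+1)-clique C, and the n+1 sets C \ {y}
   would be distinct n-cliques, i.e. more than |V(T)| vertices of T. Hence
   omega(G) = n and T is a maximum TJ_n-graph. *)

Lemma subset_of_card (T : finType) (A : {set T}) (k : nat) :
  k <= #|A| -> exists2 B : {set T}, B \subset A & #|B| = k.
Proof.
elim: k => [|k IH] le_kA; first by exists set0; rewrite ?sub0set ?cards0.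
have [B sBA cardB] := IH (ltnW le_kA).
have : 0 < #|A :\: B| by rewrite cardsD (setIidPr sBA) cardB subn_gt0.
case/card_gt0P => x; rewrite inE => /andP [xNB xA].
exists (x |: B); first by rewrite subUset sub1set xA sBA.
by rewrite cardsU1 xNB cardB.
Qed.

Section Cliques.

Variables (V : finType) (e : rel V).

Definition cliques_of_card (k : nat) : {set {set V}} :=
  [set C | clique e C && (#|C| == k)].

Lemma cliqueS (C D : {set V}) : D \subset C -> clique e C -> clique e D.
Proof.
move=> /subsetP sDC /forall_inP cC; apply/forall_inP => x xD.
have /forall_inP cCx := cC x (sDC x xD).
by apply/forall_inP => y yD; apply: cCx; apply: sDC.
Qed.

Lemma card_le_cliques_of_card_pred (C : {set V}) :
  clique e C -> #|C| <= #|cliques_of_card #|C|.-1|.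
Proof.
move=> cC; have delete_inj : {in C &, injective (fun y => C :\ y)}.
  move=> y z _ zC eq_yz; apply/eqP; apply: contraT => neq_yz.
  by have := setD11 z C; rewrite -eq_yz !inE eq_sym neq_yz zC.
rewrite -{1}(card_in_imset delete_inj); apply/subset_leq_card/subsetP.
move=> _ /imsetP [y yC ->]; rewrite inE (cliqueS (subD1set C y) cC) /=.
by rewrite [in X in _ == X](cardsD1 y C) yC.
Qed.

End Cliques.

Section TokenJumping.

Variables (k : nat) (VT : finType) (eT : rel VT) (V : finType) (e : rel V).
Hypothesis isoT : iso_TJ k eT e.

Lemma card_iso_TJ : #|VT| = #|cliques_of_card e k|.
Proof.
have [f [f_inj [f_onto _]]] := isoT.
rewrite -cardsT -(card_imset [set: VT] f_inj); apply: eq_card => C.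
rewrite inE; apply/imsetP/idP => [[x _ ->] | /f_onto [x <-]]; last by exists x.
by apply/f_onto; exists x.
Qed.

Lemma clique_number_le_iso_TJ : #|VT| <= k -> clique_number e <= k.
Proof.
move=> le_VT_k; apply/bigmax_leqP => C cC; rewrite leqNgt; apply/negP => lt_kC.
have [D sDC cardD] := subset_of_card lt_kC.
have := card_le_cliques_of_card_pred (cliqueS sDC cC).
by rewrite cardD -card_iso_TJ ltnNge le_VT_k.
Qed.

Lemma clique_number_ge_iso_TJ : 0 < #|VT| -> k <= clique_number e.
Proof.
rewrite card_iso_TJ => /card_gt0P [C]; rewrite inE => /andP [cC /eqP <-].
exact: leq_bigmax_cond.
Qed.

End TokenJumping.

Theorem proposition4p13 (VT : finType) (eT : rel VT) :
  simple_graph eT -> 0 < #|VT| ->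
  (forall m : nat, exists n : nat, m <= n /\ is_TJ_graph n eT) ->
  exists k : nat, is_max_TJ_graph k eT.
Proof.
move=> _ VT_gt0 TJ_unbounded.
have [n [le_VT_n [V [e [simple_e isoT]]]]] := TJ_unbounded #|VT|.
exists n, V, e; split=> //; split=> //; apply/eqP; rewrite eqn_leq.
by rewrite (clique_number_le_iso_TJ isoT le_VT_n) (clique_number_ge_iso_TJ isoT VT_gt0).
Qed.
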